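(* Let $q$ be an odd prime power, $n$ a positive integer with $n\mid(q-1)$, $\lambda\in\mathbb{F}_q^{*}$ with multiplicative order dividing $\frac{q-1}{n}$, and let $\alpha_1,\dots,\alpha_n\in\mathbb{F}_q^{*}$ be the (pairwise distinct) roots of $x^n-\lambda$, i.e. $x^n-\lambda=\prod_{i=1}^n(x-\alpha_i)$, in some fixed order. Let $\ell\ge0$, $\boldsymbol\eta=(\eta_0,\dots,\eta_\ell)\in\mathbb{F}_q^{\ell+1}\setminus\{\boldsymbol0\}$, and let $k$ be an integer with $2\le k\le\frac{n-2\ell-1}{2}$. Let $\boldsymbol v=(v_1,\dots,v_n)$ with $v_i\in\{-1,1\}$ for $1\le i\le n-k+1$ and $v_i\in\mathbb{F}_q\setminus\{-1,0,1\}$ for $n-k+2\le i\le n$. Then the $( * )$-$(\mathcal{L},\mathcal{P})$-TGRS code $\mathcal{C}$ is an LCD code, i.e. $\mathcal{C}\cap\mathcal{C}^{\perp}=\{\boldsymbol0\}$.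
   Context: The $( * )$-$(\mathcal{L},\mathcal{P})$-TGRS code is $\mathcal{C}=\{(v_1f(\alpha_1),\dots,v_nf(\alpha_n)) : f\in\mathcal{F}_{n,k,\boldsymbol\eta}\}$, where $\mathcal{F}_{n,k,\boldsymbol\eta}=\{\sum_{i=0}^{k-1}f_ix^i+f_0\sum_{j=0}^{\ell}\eta_jx^{k+j} : f_i\in\mathbb{F}_q\}$; equivalently it is generated by the $k\times n$ matrix whose first row is $\big(v_j(1+\sum_{t=0}^{\ell}\eta_t\alpha_j^{k+t})\big)_{j}$ and whose row $i$ ($1\le i\le k-1$) is $(v_j\alpha_j^{i})_j$. $\mathcal{C}^{\perp}$ is the dual with respect to the standard inner product $\sum_i x_iy_i$. *)

From HB Require Import structures.
From mathcomp Require Import all_boot all_order all_algebra all_field.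
Set Implicit Arguments. Unset Strict Implicit. Unset Printing Implicit Defensive.
Import GRing.Theory.
Local Open Scope ring_scope.

Definition tgrs_poly (F : fieldType) (k ell : nat) (eta : 'I_ell.+1 -> F)
  (f : nat -> F) : {poly F} :=
  \sum_(i < k) f i *: 'X^i + f 0%N *: \sum_(j < ell.+1) eta j *: 'X^(k + j).

Definition in_tgrs (F : fieldType) (n k ell : nat) (eta : 'I_ell.+1 -> F)
  (alpha v : 'I_n -> F) (c : 'rV[F]_n) : Prop :=
  exists f : nat -> F, c = \row_j (v j * (tgrs_poly k eta f).[alpha j]).

Definition dotv (F : fieldType) (n : nat) (c d : 'rV[F]_n) : F :=
  \sum_(j < n) c 0 j * d 0 j.

Definition in_dual (F : fieldType) (n : nat) (C : 'rV[F]_n -> Prop) (d : 'rV[F]_n) : Prop :=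
  forall c, C c -> dotv c d = 0.

Definition is_LCD (F : fieldType) (n : nat) (C : 'rV[F]_n -> Prop) : Prop :=
  forall c, C c -> in_dual C c -> c = 0.

(* For a polynomial h of degree < n, the power sums of the roots of x^n - lambda
   vanish in degrees 1..n-1 (multiplying the roots by a primitive n-th root of
   unity permutes them), so sum_i h(alpha_i) = n h(0).  Hence for codewords c_g,
   c_f with polynomials G, P one gets
     <c_g, c_f> = n g_0 f_0 + sum_(j in T) (v_j^2 - 1) G(alpha_j) P(alpha_j),
   where T is the set of the last k - 1 positions, the only ones with v_j^2 <> 1.
   If c_f is also in the dual code, testing against G = x prod_(j in T, j <> s)
   (x - alpha_j) gives P(alpha_s) = 0 for s in T, and then testing against any
   g with g_0 = 1 gives f_0 = 0; so P has degree < k and the k roots 0 and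
   alpha_j (j in T), hence P = 0. *)

From HB Require Import structures.
From mathcomp Require Import all_boot all_order all_algebra all_field.
From mathcomp Require Import cyclic zify.
Set Implicit Arguments.
Unset Strict Implicit.
Unset Printing Implicit Defensive.
Import GRing.Theory.
Local Open Scope ring_scope.

Lemma natr_card_finNzRing (R : finNzRingType) : #|R|%:R = 0 :> R.
Proof.
have : \sum_(x : R) (x + 1) = \sum_(x : R) x.
  by rewrite [RHS](reindex_inj (addIr 1)).
by rewrite big_split /= sumr_const cardT -cardE addrC -[RHS]add0r => /addIr.
Qed.

Lemma natr_neq0_dvd_card_pred (R : finNzRingType) n :
  (n %| #|R|.-1)%N -> n%:R != 0 :> R.
Proof.
case/dvdnP=> d def_q; apply: contra_neq (oner_neq0 R) => n0.
have q_gt0 : (0 < #|R|)%N by apply/card_gt0P; exists 0.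
rewrite -(natr_card_finNzRing R) -(prednK q_gt0) -addn1 natrD def_q natrM n0.
by rewrite mulr0 add0r.
Qed.

Section RootsOfBinomial.
Variables (F : fieldType) (n : nat) (lambda : F) (alpha : 'I_n -> F).
Hypotheses (n_gt0 : (0 < n)%N) (n_neq0 : n%:R != 0 :> F) (lambda_neq0 : lambda != 0).
Hypothesis Xn_sub_lambda : 'X^n - lambda%:P = \prod_(x <- codom alpha) ('X - x%:P).

Lemma root_Xn_sub_lambda x : root ('X^n - lambda%:P) x = (x \in codom alpha).
Proof. by rewrite Xn_sub_lambda root_prod_XsubC. Qed.

Lemma alpha_expr i : alpha i ^+ n = lambda.
Proof.
have : root ('X^n - lambda%:P) (alpha i) by rewrite root_Xn_sub_lambda codom_f.
by rewrite rootE !hornerE subr_eq0 => /eqP.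
Qed.

Lemma alpha_neq0 i : alpha i != 0.
Proof.
by apply: contra_neq lambda_neq0 => ai0; rewrite -(alpha_expr i) ai0 expr0n gtn_eqF.
Qed.

Lemma separable_Xn_sub_lambda : separable_poly ('X^n - lambda%:P).
Proof.
rewrite unlock; apply/Bezout_coprimepP.
exists ((- lambda^-1)%:P, (lambda^-1 / n%:R) *: 'X) => /=.
rewrite derivB derivXn derivC subr0 -scalerAl mulrnAr -(prednK n_gt0) -exprS.
rewrite -scaler_nat scalerA (prednK n_gt0) mulfVK // mulrBr -polyCM mulNr mulVf //.
by rewrite mul_polyC scaleNr polyCN opprK addrAC addNr add0r eqpxx.
Qed.

Lemma uniq_codom_alpha : uniq (codom alpha).
Proof. by rewrite -separable_prod_XsubC -Xn_sub_lambda separable_Xn_sub_lambda. Qed.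

Lemma alpha_inj : injective alpha.
Proof.
by apply/injectiveP; rewrite /injectiveb /dinjectiveb -codomE uniq_codom_alpha.
Qed.

Lemma perm_mulr_codom_alpha z : z ^+ n = 1 ->
  perm_eq [seq z * x | x <- codom alpha] (codom alpha).
Proof.
move=> zn1; have z0 : z != 0.
  by apply: contraNneq (oner_neq0 F) => z0; rewrite -zn1 z0 expr0n gtn_eqF.
have uniq_z : uniq [seq z * x | x <- codom alpha].
  by rewrite map_inj_uniq ?uniq_codom_alpha //; apply: mulfI.
have sub_z : {subset [seq z * x | x <- codom alpha] <= codom alpha}.
  move=> _ /mapP[x ax ->]; rewrite -root_Xn_sub_lambda -root_Xn_sub_lambda in ax *.
  by move: ax; rewrite !rootE !hornerE exprMn zn1 mul1r.
have [_ eq_z] := uniq_min_size uniq_z sub_z (eq_leq (esym (size_map _ _))).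
exact: uniq_perm uniq_z uniq_codom_alpha eq_z.
Qed.

Lemma sum_alpha_expr_eq0 m : (0 < m < n)%N -> \sum_i alpha i ^+ m = 0.
Proof.
case/andP=> m_gt0 lt_mn; pose i0 := Ordinal n_gt0.
have : has n.-primitive_root [seq x / alpha i0 | x <- codom alpha].
  apply: has_prim_root => //.
  - apply/allP=> _ /mapP[_ /codomP[i ->] ->].
    by rewrite unity_rootE expr_div_n !alpha_expr divff.
  - by rewrite map_inj_uniq ?uniq_codom_alpha //; apply/mulIf/invr_neq0/alpha_neq0.
  - by rewrite size_map size_codom card_ord.
case/hasP=> z _ prim_z.
have zm_neq1 : z ^+ m != 1.
  by rewrite -(expr0 z) (eq_prim_root_expr prim_z) mod0n modn_small ?gtn_eqF.
have -> : \sum_i alpha i ^+ m = \sum_(x <- codom alpha) x ^+ m.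
  by rewrite big_map enumT.
set S := \sum_(x <- codom alpha) _.
have : S = z ^+ m * S.
  rewrite /S -[LHS](perm_big _ (perm_mulr_codom_alpha (prim_expr_order prim_z))).
  by rewrite big_map mulr_sumr; apply: eq_bigr => x _; rewrite exprMn.
move/eqP; rewrite -subr_eq0 -{1}[S]mul1r -mulrBl mulf_eq0 subr_eq0 eq_sym.
by rewrite (negPf zm_neq1) => /eqP.
Qed.

Lemma sum_horner_alpha (h : {poly F}) :
  (size h <= n)%N -> \sum_i h.[alpha i] = n%:R * h`_0.
Proof.
move=> size_h; under eq_bigr do rewrite (horner_coef_wide _ size_h).
rewrite exchange_big (bigD1 (Ordinal n_gt0)) //= [X in _ + X]big1 ?addr0.
  by under eq_bigr do rewrite expr0 mulr1; rewrite sumr_const card_ord mulr_natl.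
move=> j j_neq0; rewrite -mulr_sumr sum_alpha_expr_eq0 ?mulr0 //= ltn_ord andbT lt0n.
by apply: contra_neq j_neq0 => j0; apply: val_inj.
Qed.

End RootsOfBinomial.

Section TGRSPolynomials.
Variables (F : fieldType) (k ell : nat) (eta : 'I_ell.+1 -> F).

Lemma size_tgrs_poly f : (size (tgrs_poly k eta f) <= k + ell.+1)%N.
Proof.
rewrite /tgrs_poly -poly_def (leq_trans (size_polyD _ _)) // geq_max.
rewrite (leq_trans (size_poly _ _)) ?leq_addr //=.
apply: leq_trans (size_scale_leq _ _) _; apply: leq_trans (size_sum _ _ _) _.
apply/bigmax_leqP => j _; rewrite (leq_trans (size_scale_leq _ _)) //.
by rewrite size_polyXn -addnS leq_add2l.
Qed.

Lemma tgrs_poly_coef0_eq0 f : f 0%N = 0 -> tgrs_poly k eta f = \poly_(i < k) f i.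
Proof. by move=> f0; rewrite /tgrs_poly f0 scale0r addr0 poly_def. Qed.

Hypothesis k_gt0 : (0 < k)%N.

Lemma coef0_tgrs_poly f : (tgrs_poly k eta f)`_0 = f 0%N.
Proof.
rewrite /tgrs_poly -poly_def coefD coef_poly k_gt0 coefZ coef_sum big1 ?mulr0 ?addr0 //.
by move=> j _; rewrite coefZ coefXn eq_sym addn_eq0 gtn_eqF ?mulr0.
Qed.

Lemma tgrs_poly_coef (P : {poly F}) : P`_0 = 0 -> (size P <= k)%N ->
  tgrs_poly k eta (fun i => P`_i) = P.
Proof.
move=> P0 size_P; rewrite tgrs_poly_coef0_eq0 //; apply/polyP => i.
by rewrite coef_poly; case: ltnP => // le_ki; rewrite nth_default // (leq_trans size_P).
Qed.

End TGRSPolynomials.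

Section TGRSCodeLCD.
Variables (F : fieldType) (n k ell : nat) (eta : 'I_ell.+1 -> F) (alpha v : 'I_n -> F).
Hypotheses (alpha_inj : injective alpha) (alpha_neq0 : forall i, alpha i != 0).
Hypothesis sum_horner_alpha :
  forall h : {poly F}, (size h <= n)%N -> \sum_i h.[alpha i] = n%:R * h`_0.
Hypotheses (n_neq0 : n%:R != 0 :> F) (k_gt0 : (0 < k)%N).
Hypothesis size_n : (2 * k + 2 * ell + 1 <= n)%N.

Let T := [set j | v j ^+ 2 != 1].
Hypothesis card_T : #|T| = k.-1.

Let P f := tgrs_poly k eta f.
Let word f := \row_j (v j * (P f).[alpha j]).

Lemma dotv_tgrs_word g f : dotv (word g) (word f) =
  n%:R * (g 0%N * f 0%N) + \sum_(j in T) (v j ^+ 2 - 1) * (P g * P f).[alpha j].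
Proof.
have size_PgPf : (size (P g * P f)%R <= n)%N.
  apply: leq_trans (size_polyMleq _ _) _.
  have := size_tgrs_poly k eta g; have := size_tgrs_poly k eta f.
  rewrite -/(P f) -/(P g); lia.
rewrite -(coef0_tgrs_poly eta k_gt0 g) -(coef0_tgrs_poly eta k_gt0 f) -coef0M.
rewrite -sum_horner_alpha // [\sum_(j in T) _]big_mkcond -big_split /dotv /=.
apply: eq_bigr => j _; rewrite !mxE inE mulrACA -expr2 -hornerM /=.
case: ifPn => [_|/negbNE/eqP ->]; last by rewrite mul1r addr0.
by rewrite mulrBl mul1r addrC subrK.
Qed.

Section Dual.
Variable f : nat -> F.
Hypothesis dual_f : in_dual (in_tgrs k eta alpha v) (word f).

Let dotv_word_f_eq0 g : dotv (word g) (word f) = 0.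
Proof. by apply: dual_f; exists g. Qed.

Lemma dual_tgrs_root s : s \in T -> (P f).[alpha s] = 0.
Proof.
move=> Ts; pose A := T :\ s.
pose G := \prod_(x <- [seq alpha j | j in A]) ('X - x%:P) * 'X.
have rootG j : (G.[alpha j] == 0) = (j \in A).
  rewrite hornerM hornerX mulf_eq0 (negPf (alpha_neq0 j)) orbF -/(root _ _).
  by rewrite root_prod_XsubC mem_image.
have size_G : (size G <= k)%N.
  rewrite size_mulX ?monic_neq0 ?monic_prod_XsubC // size_prod_XsubC size_image.
  by move: card_T; rewrite (cardsD1 s T) Ts add1n => ->; rewrite prednK.
have := dotv_word_f_eq0 (fun i => G`_i).
rewrite dotv_tgrs_word /P tgrs_poly_coef ?coefMX // eqxx mul0r mulr0 add0r.
rewrite (bigD1 s) //= big1 ?addr0 => [|j /andP[Tj j_neq_s]]; last first.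
  have /eqP Gj0 : G.[alpha j] == 0 by rewrite rootG in_setD1 j_neq_s Tj.
  by rewrite hornerM Gj0 mul0r mulr0.
move: Ts; rewrite hornerM inE -subr_eq0 => /negPf vs.
by move/eqP; rewrite !mulf_eq0 vs rootG !inE eqxx /= => /eqP.
Qed.

Lemma dual_tgrs_coef0 : f 0%N = 0.
Proof.
have := dotv_word_f_eq0 (fun i => (i == 0%N)%:R).
rewrite dotv_tgrs_word big1 => [|j Tj]; last by rewrite hornerM dual_tgrs_root ?mulr0.
by rewrite eqxx mul1r addr0 => /eqP; rewrite mulf_eq0 (negPf n_neq0) => /eqP.
Qed.

Lemma dual_tgrs_poly_eq0 : P f = 0.
Proof.
have def_Pf : P f = \poly_(i < k) f i := tgrs_poly_coef0_eq0 k eta dual_tgrs_coef0.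
apply/eqP; apply: contraTT (size_poly k f); rewrite -def_Pf -ltnNge => Pf_neq0.
have <- : size (0 :: [seq alpha j | j in T]) = k by rewrite /= size_image card_T prednK.
apply: max_poly_roots Pf_neq0 _ _.
- apply/allP => x; rewrite inE => /predU1P[-> | /imageP[j Tj ->]].
    by rewrite rootE horner_coef0 coef0_tgrs_poly ?dual_tgrs_coef0.
  by rewrite rootE dual_tgrs_root.
- rewrite /= map_inj_uniq ?enum_uniq // andbT.
  by apply/imageP => -[j _ /esym/eqP]; rewrite (negPf (alpha_neq0 j)).
Qed.

End Dual.

Lemma tgrs_LCD : is_LCD (in_tgrs k eta alpha v).
Proof.
move=> _ [f ->] dual_f; apply/rowP => j.
by rewrite !mxE -/(P f) dual_tgrs_poly_eq0 // horner0 mulr0.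
Qed.

End TGRSCodeLCD.

Lemma card_ord_geq n a : #|[set j : 'I_n | (a <= j)%N]| = (n - a)%N.
Proof.
rewrite -sum1_card (eq_bigl (fun j : 'I_n => true && (a <= j))%N) => [|j].
  by rewrite -(big_geq_mkord a n xpredT (fun=> 1%N)) sum_nat_const_nat muln1.
by rewrite inE.
Qed.

Theorem theorem4p3 (F : finFieldType) (n : nat) (lambda : F) (alpha : 'I_n -> F)
  (ell : nat) (eta : 'I_ell.+1 -> F) (k : nat) (v : 'I_n -> F) :
  odd #|F| ->
  (0 < n)%N ->
  (n %| #|F|.-1)%N ->
  lambda != 0 ->
  lambda ^+ (#|F|.-1 %/ n) = 1 ->
  'X^n - lambda%:P = \prod_(i < n) ('X - (alpha i)%:P) ->
  (exists j, eta j != 0) ->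
  (2 <= k)%N ->
  (2 * k + 2 * ell + 1 <= n)%N ->
  (forall i : 'I_n, (i < n - k + 1)%N -> v i = 1 \/ v i = -1) ->
  (forall i : 'I_n, (n - k + 1 <= i)%N -> v i \notin [:: -1; 0; 1]) ->
  is_LCD (in_tgrs k eta alpha v).
Proof.
move=> _ n_gt0 n_dvd lambda_neq0 _ Xn_sub_lambda _ k_ge2 size_n v_pm1 v_gen.
have n_neq0 := natr_neq0_dvd_card_pred n_dvd.
have {}Xn_sub_lambda : 'X^n - lambda%:P = \prod_(x <- codom alpha) ('X - x%:P).
  by rewrite Xn_sub_lambda big_map enumT.
have k_gt0 : (0 < k)%N by apply: leq_trans k_ge2.
have card_T : #|[set j | v j ^+ 2 != 1]| = k.-1.
  suff -> : [set j | v j ^+ 2 != 1] = [set j : 'I_n | (n - k + 1 <= j)%N].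
    by rewrite card_ord_geq -subn1; lia.
  apply/setP => j; rewrite !inE sqrf_eq1; case: leqP => [/v_gen | /v_pm1[] ->].
  - by rewrite !inE; apply: contra => /orP[]->; rewrite ?orbT.
  - by rewrite eqxx.
  - by rewrite eqxx orbT.
apply: tgrs_LCD size_n card_T => //.
- exact: alpha_inj Xn_sub_lambda.
- exact: alpha_neq0 Xn_sub_lambda.
- exact: sum_horner_alpha Xn_sub_lambda.
Qed.
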